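(* Let $D\ge1$, let $Q_D$ be the $D$-dimensional hypercube on $X=\{0,1\}^D$ with adjacency matrix $A$. For $1\le i<j\le D$ the matrix $B_{ij}=\alpha^*_iA\alpha^*_j-\alpha^*_jA\alpha^*_i$ is antisymmetric and $A$-like.
   Context: $Q_D$ is the graph with vertex set $X=\{0,1\}^D$, two vertices adjacent iff they differ in exactly one coordinate. Matrices are real with rows and columns indexed by $X$. A matrix $B$ is $A$-like if $BA=AB$ and $B_{xy}=0$ for all $x,y\in X$ that are neither equal nor adjacent; it is antisymmetric if $B^t=-B$. For $1\le i\le D$, $\alpha^*_i$ is the diagonal matrix with $(x,x)$-entry $1$ if $x_i=0$ and $-1$ if $x_i=1$. *)

From mathcomp Require Import all_boot all_order all_algebra.
From mathcomp Require Import reals.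
Set Implicit Arguments. Unset Strict Implicit. Unset Printing Implicit Defensive.
Import GRing.Theory Num.Theory.
Local Open Scope ring_scope.

(* Vertex set X = {0,1}^D, coordinates indexed by 'I_D (coordinate i of the
   paper, 1 <= i <= D, is the ordinal i-1). false = 0, true = 1. *)
Definition cube (D : nat) := {ffun 'I_D -> bool}.

Definition cmat (R : Type) (D : nat) := cube D -> cube D -> R.

Definition cmul (R : realType) (D : nat) (M N : cmat R D) : cmat R D :=
  fun x y => \sum_(z : cube D) M x z * N z y.

Definition ctr (R : Type) (D : nat) (M : cmat R D) : cmat R D := fun x y => M y x.

Definition hdist (D : nat) (x y : cube D) : nat := #|[set i | x i != y i]|.

Definition adjacent (D : nat) (x y : cube D) : bool := hdist x y == 1%N.

Definition adjQ (R : realType) (D : nat) : cmat R D :=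
  fun x y => if adjacent x y then 1 else 0.

Definition alpha_star (R : realType) (D : nat) (i : 'I_D) : cmat R D :=
  fun x y => if x == y then (if x i then -1 else 1) else 0.

Definition A_like (R : realType) (D : nat) (B : cmat R D) : Prop :=
  cmul B (@adjQ R D) = cmul (@adjQ R D) B /\
  forall x y : cube D, x != y -> ~~ adjacent x y -> B x y = 0.

Definition antisym (R : realType) (D : nat) (B : cmat R D) : Prop :=
  ctr B = (fun x y => - B x y).

Definition Bmat (R : realType) (D : nat) (i j : 'I_D) : cmat R D :=
  fun x y => cmul (cmul (@alpha_star R D i) (@adjQ R D)) (@alpha_star R D j) x y
           - cmul (cmul (@alpha_star R D j) (@adjQ R D)) (@alpha_star R D i) x y.

From mathcomp Require Import all_boot all_order all_algebra.
From mathcomp Require Import reals.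
From mathcomp Require boolp.
From mathcomp Require Import ring.
Set Implicit Arguments. Unset Strict Implicit. Unset Printing Implicit Defensive.
Import GRing.Theory Num.Theory.
Local Open Scope ring_scope.

(* Write [x^k] for [x] with coordinate [k] flipped and [spin k x] for the
   diagonal entry of [alpha^*_k] at [x]. The neighbours of [x] are the [x^k],
   and [B x z] vanishes unless [z = x^i] or [z = x^j], where it equals
   [2 s(x)] resp. [-2 s(x)] with [s := spin i * spin j]. Hence
   [(BA) x y = 2 s(x) (A x y^i - A x y^j)], while antisymmetry of [B] gives
   [(AB) x y = -2 s(y) (A x y^i - A x y^j)]. These agree: either [s(x) = -s(y)],
   or [x] and [y] agree (or differ) at both [i] and [j], in which case [y^i]
   and [y^j] are at the same Hamming distance from [x]. *)

Section Hypercube.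
Variables (R : realType) (D : nat).
Implicit Types (x y z : cube D) (k l : 'I_D).

Definition flip k x : cube D := [ffun l => if l == k then ~~ x l else x l].

Definition spin k x : R := if x k then -1 else 1.

Lemma flipK k : involutive (flip k).
Proof. by move=> x; apply/ffunP => l; rewrite !ffunE; case: (l == k); rewrite ?negbK. Qed.

Lemma eq_flip k y z : (y == flip k z) = (z == flip k y).
Proof. by apply/eqP/eqP => ->; rewrite flipK. Qed.

Lemma flip_inj k l x : (flip k x == flip l x) = (k == l).
Proof.
apply/eqP/eqP => [/ffunP/(_ k)|-> //]; rewrite !ffunE eqxx.
by case: eqP => // _; case: (x k).
Qed.

Lemma spin_flip k x : spin k (flip k x) = - spin k x.
Proof. by rewrite /spin ffunE eqxx; case: (x k); rewrite ?opprK. Qed.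

Lemma spin_flipN k l x : l != k -> spin l (flip k x) = spin l x.
Proof. by move=> lk; rewrite /spin ffunE (negbTE lk). Qed.

Lemma hdistC x y : hdist x y = hdist y x.
Proof. by apply: eq_card => l; rewrite !inE eq_sym. Qed.

Lemma hdist_flipl k x y : hdist (flip k x) y = hdist x (flip k y).
Proof.
apply: eq_card => l; rewrite !inE !ffunE.
by case: (l == k); case: (x l); case: (y l).
Qed.

Lemma hdist_flip k x y :
  hdist x (flip k y) = if x k == y k then (hdist x y).+1 else (hdist x y).-1.
Proof.
rewrite /hdist; set S := [set l | x l != y l].
have flipS : [set l | x l != flip k y l] = if x k == y k then k |: S else S :\ k.
  apply/setP => l; case: ifP => xyk; rewrite !inE ffunE;
  case: (eqVneq l k) => [->|nlk] //=; by move: xyk; case: (x k); case: (y k).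
rewrite flipS; case: ifP => xyk.
  by rewrite cardsU1 inE xyk.
by rewrite (cardsD1 k S) inE xyk.
Qed.

Lemma hdistxx x : hdist x x = 0%N.
Proof. by apply: eq_card0 => l; rewrite inE eqxx. Qed.

Lemma adjacent_flip k x : adjacent x (flip k x).
Proof. by rewrite /adjacent hdist_flip eqxx hdistxx. Qed.

Lemma adjacentP x z : adjacent x z -> exists k, z = flip k x.
Proof.
move=> /cards1P [k Sk]; exists k; apply/ffunP => l; rewrite ffunE.
move/setP: Sk => /(_ l); rewrite !inE.
by case: (l == k); case: (x l); case: (z l).
Qed.

Lemma adjQC x y : adjQ R x y = adjQ R y x.
Proof. by rewrite /adjQ /adjacent hdistC. Qed.

Lemma adjQ_flipl k x y : adjQ R (flip k x) y = adjQ R x (flip k y).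
Proof. by rewrite /adjQ /adjacent hdist_flipl. Qed.

Lemma cmul_alpha_starl k (M : cmat R D) x y :
  cmul (@alpha_star R D k) M x y = spin k x * M x y.
Proof.
rewrite /cmul (bigD1 x) //= /alpha_star eqxx big1 ?addr0 // => z /negbTE.
by rewrite eq_sym => ->; rewrite mul0r.
Qed.

Lemma cmul_alpha_starr k (M : cmat R D) x y :
  cmul M (@alpha_star R D k) x y = M x y * spin k y.
Proof.
rewrite /cmul (bigD1 y) //= /alpha_star eqxx big1 ?addr0 // => z /negbTE ->.
by rewrite mulr0.
Qed.

Lemma sum_delta (a : cube D) (F : cube D -> R) : \sum_z (z == a)%:R * F z = F a.
Proof. by rewrite (bigD1 a) //= eqxx mul1r big1 ?addr0 // => z /negbTE ->; rewrite mul0r. Qed.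

Variables (i j : 'I_D).
Hypothesis neq_ij : i != j.

Let s x := spin i x * spin j x.
Local Notation B := (@Bmat R D i j).

Lemma Bmat_adjQ x y :
  B x y = adjQ R x y * (spin i x * spin j y - spin j x * spin i y).
Proof. by rewrite /Bmat !cmul_alpha_starr !cmul_alpha_starl; ring. Qed.

Lemma Bmat_antisym x y : B y x = - B x y.
Proof. by rewrite !Bmat_adjQ adjQC; ring. Qed.

Lemma Bmat_flip x z :
  B x z = 2 * s x * ((z == flip i x)%:R - (z == flip j x)%:R).
Proof.
rewrite Bmat_adjQ /adjQ; have [/adjacentP [k ->]|nxz] := boolP (adjacent x z).
  rewrite !flip_inj mul1r.
  have [->|nki] := eqVneq k i.
    by rewrite (negbTE neq_ij) spin_flip spin_flipN 1?eq_sym // /s /=; ring.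
  have [->|nkj] := eqVneq k j.
    by rewrite spin_flip spin_flipN // /s /=; ring.
  by rewrite !spin_flipN 1?eq_sym // /s /=; ring.
have nflip k : (z == flip k x) = false.
  by apply: contraNF nxz => /eqP ->; apply: adjacent_flip.
by rewrite !nflip /s /=; ring.
Qed.

Lemma cmul_Bmat_adjQ x y :
  cmul B (@adjQ R D) x y =
  2 * s x * (adjQ R x (flip i y) - adjQ R x (flip j y)).
Proof.
rewrite /cmul (eq_bigr (fun z => (z == flip i x)%:R * (2 * s x * adjQ R z y)
                               - (z == flip j x)%:R * (2 * s x * adjQ R z y))).
  by rewrite sumrB !sum_delta !adjQ_flipl; ring.
by move=> z _; rewrite Bmat_flip; ring.
Qed.

Lemma cmul_adjQ_Bmat x y :
  cmul (@adjQ R D) B x y =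
  - (2 * s y * (adjQ R x (flip i y) - adjQ R x (flip j y))).
Proof.
rewrite /cmul (eq_bigr (fun z => (z == flip i y)%:R * (- 2 * s y * adjQ R x z)
                               - (z == flip j y)%:R * (- 2 * s y * adjQ R x z))).
  by rewrite sumrB !sum_delta; ring.
by move=> z _; rewrite Bmat_antisym Bmat_flip eq_flip (eq_flip j); ring.
Qed.

Lemma spin_adjQ_flip x y :
  (s x + s y) * (adjQ R x (flip i y) - adjQ R x (flip j y)) = 0.
Proof.
have [same|diff] := eqVneq (x i == y i) (x j == y j).
  by rewrite /adjQ /adjacent !hdist_flip same subrr mulr0.
suff -> : s x + s y = 0 by rewrite mul0r.
by move: diff; rewrite /s /spin; case: (x i); case: (y i); case: (x j); case: (y j) => //= _; ring.
Qed.

Lemma Bmat_adjQ_commute x y :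
  cmul B (@adjQ R D) x y = cmul (@adjQ R D) B x y.
Proof.
rewrite cmul_Bmat_adjQ cmul_adjQ_Bmat; apply/eqP; rewrite -subr_eq0; apply/eqP.
by rewrite -[RHS](mulr0 2) -(spin_adjQ_flip x y); ring.
Qed.

End Hypercube.

Theorem lemma9p5 (R : realType) (D : nat) (hD : (1 <= D)%N) (i j : 'I_D)
  (hij : (i < j)%N) :
  antisym (@Bmat R D i j) /\ A_like (@Bmat R D i j).
Proof.
have neq_ij : i != j by rewrite -val_eqE /= ltn_eqF.
split; first by apply/boolp.funext => x; apply/boolp.funext => y; rewrite /ctr Bmat_antisym.
split; last by move=> x y _ nxy; rewrite Bmat_adjQ /adjQ (negbTE nxy) mul0r.
by apply/boolp.funext => x; apply/boolp.funext => y; apply: Bmat_adjQ_commute.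
Qed.
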